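(* Let $x,y,z$ be positive integers with $\gcd(x,y)=1$. If there is a prime $p\ge 3$ such that $x^{p}+y^{p}=z^{p}$, then $z+2\le x+y\le 2(z-1)$. *)

From mathcomp Require Import all_boot.

(* Reducing x^p + y^p = z^p modulo p with Fermat's little theorem gives
   z = x + y (mod p); since x, y < z < x + y, the difference x + y - z is a
   positive multiple of p >= 3, and each of x, y is at most z - 1. *)
From mathcomp Require Import all_boot.
From mathcomp Require Import zify.

Lemma ltn_expD x y p : 0 < x -> 0 < y -> 1 < p -> x ^ p + y ^ p < (x + y) ^ p.
Proof.
move=> x_gt0 y_gt0 p_gt1; rewrite -(prednK (ltnW p_gt1)) !expnS mulnDl.
have ltx : x * x ^ p.-1 < x * (x + y) ^ p.-1.
  by rewrite ltn_pmul2l // ltn_exp2r; lia.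
have ley : y * y ^ p.-1 <= y * (x + y) ^ p.-1.
  by rewrite leq_mul2l leq_exp2r ?orbT; lia.
by rewrite -addSn leq_add.
Qed.

Lemma ltn_expD_root x y z p :
  0 < y -> 0 < p -> x ^ p + y ^ p = z ^ p -> x < z.
Proof.
move=> y_gt0 p_gt0 E; rewrite -(ltn_exp2r _ _ p_gt0) -E -addn1 leq_add2l.
by rewrite expn_gt0 y_gt0.
Qed.

Lemma fermat_sum_eq_mod p x y z :
  prime p -> x ^ p + y ^ p = z ^ p -> z = x + y %[mod p].
Proof.
move=> p_pr E.
by rewrite -(fermat_little z p_pr) -E -modnDm !fermat_little // modnDm.
Qed.

Theorem theorem5 (x y z : nat) :
  0 < x -> 0 < y -> 0 < z -> coprime x y ->
  (exists p : nat, [/\ prime p, 3 <= p & x ^ p + y ^ p = z ^ p]) ->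
  z + 2 <= x + y <= 2 * (z - 1).
Proof.
move=> x_gt0 y_gt0 _ _ [p [p_pr p_ge3 E]].
have p_gt0 : 0 < p by rewrite prime_gt0.
have x_lt_z : x < z by exact: ltn_expD_root E.
have y_lt_z : y < z by rewrite addnC in E; exact: ltn_expD_root E.
have z_lt_xy : z < x + y.
  by rewrite -(ltn_exp2r _ _ p_gt0) -E ltn_expD // prime_gt1.
have p_dvd : p %| (x + y) - z.
  by rewrite -eqn_mod_dvd ?(ltnW z_lt_xy) // (fermat_sum_eq_mod _ _ _ _ p_pr E).
have : p <= (x + y) - z by apply: dvdn_leq; rewrite // subn_gt0.
lia.
Qed.
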